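(* Let $p\ge 4$ be an integer and let $T_1$ be the tree obtained from an induced path $a_1\text{-}a_2\text{-}\cdots\text{-}a_p$ by adding three new vertices $x,z,y$ and the edges $a_px$, $xz$ and $a_py$. For every integer $d\ge 1$ (and every such $T_1$) there exists a polynomial $f$ such that for every integer $t\ge 1$ the following holds: if $G$ is a paw-free graph that is $T_1$-free and does not contain $K_d(t)$ as a subgraph, then $\chi(G)\le f(t)$.
   Context: All graphs are finite and simple. $\chi(G)$ is the chromatic number of $G$. A graph is $H$-free if it has no induced subgraph isomorphic to $H$. The paw is the graph on four vertices consisting of a triangle together with one additional vertex adjacent to exactly one vertex of the triangle. For integers $d,t\ge1$, $K_d(t)$ denotes the complete $d$-partite graph in which each of the $d$ parts has exactly $t$ vertices; ''contains $K_d(t)$ as a subgraph'' means as a (not necessarily induced) subgraph. *)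

From mathcomp Require Import all_boot all_order all_algebra.
Set Implicit Arguments. Unset Strict Implicit. Unset Printing Implicit Defensive.

Definition simple_graph (V : finType) (e : rel V) : Prop :=
  symmetric e /\ irreflexive e.

Definition induced_sub (W V : finType) (h : rel W) (e : rel V) : Prop :=
  exists phi : W -> V, injective phi /\ forall a b, e (phi a) (phi b) = h a b.

Definition H_free (W V : finType) (h : rel W) (e : rel V) : Prop :=
  ~ induced_sub h e.

Definition paw_edge (a b : nat) : bool :=
  [|| (a == 0) && (b == 1), (a == 0) && (b == 2), (a == 1) && (b == 2)
    | (a == 2) && (b == 3)].
Definition paw : rel 'I_4 := fun a b => paw_edge a b || paw_edge b a.

(* T1(p): vertices 'I_(p+3); i < p is a_(i+1); p is x; p+1 is z; p+2 is y.
   Edges: a_i a_(i+1), a_p x, x z, a_p y. *)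
Definition T1_edge (p a b : nat) : bool :=
  [|| (b == a.+1) && (b < p),
      (a == p.-1) && (b == p),
      (a == p) && (b == p.+1)
    | (a == p.-1) && (b == p.+2)].
Definition T1 (p : nat) : rel 'I_(p + 3) :=
  fun a b => T1_edge p a b || T1_edge p b a.

Definition contains_Kdt (d t : nat) (V : finType) (e : rel V) : Prop :=
  exists phi : 'I_d * 'I_t -> V, injective phi /\
    forall u v : 'I_d * 'I_t, u.1 != v.1 -> e (phi u) (phi v).

Definition colorable (V : finType) (e : rel V) (k : nat) : bool :=
  [exists c : {ffun V -> 'I_k}, [forall x, forall y, e x y ==> (c x != c y)]].

Lemma colorable_card (V : finType) (e : rel V) :
  irreflexive e -> exists k, colorable e k.
Proof.
move=> ir; exists #|V|; apply/existsP; exists [ffun x => enum_rank x].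
apply/forallP => x; apply/forallP => y; apply/implyP => exy.
rewrite !ffunE; apply/negP => /eqP /enum_rank_inj exy'.
by move: exy; rewrite exy' ir.
Qed.

(* Chromatic number (for loopless graphs; 0 is a default otherwise). *)
Definition chi (V : finType) (e : rel V) : nat :=
  match boolP [forall x, ~~ e x x] with
  | AltTrue h => ex_minn (colorable_card (fun x => negbTE ((elimT forallP h) x)))
  | AltFalse _ => 0
  end.
Arguments T1 p : clear implicits.

From mathcomp Require Import all_boot all_order all_algebra zify.

Set Implicit Arguments.
Unset Strict Implicit.
Unset Printing Implicit Defensive.

(* A component of a paw-free graph that contains a triangle xyz is complete
   multipartite: every vertex of it is adjacent to x or to y, and non-adjacency
   is transitive inside each neighbourhood, so a neighbourhood without a clique
   of size dt (hence without K_d(t)) needs fewer than dt colours.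
   A triangle-free component minus a vertex r "hangs" from the induced path r:
   S hangs from an induced path a_1 ... a_k if only a_k has neighbours in S and
   S + a_k is connected. The neighbours of a_k in S are then a stable set, and
   every component of the rest of S hangs from a longer induced path
   a_1 ... a_k n, at the cost of one colour. Once k = p, take BFS layers from
   a_p: every vertex is the end of an induced p-vertex path whose vertices
   avoid the deeper layers, and T1-freeness forces each component of a layer to
   be bipartite, so four colours (layer parity times that bipartition)
   suffice. Hence chi <= max(2dt, p + 4). *)


Lemma connect_ind (T : finType) (r : rel T) (P : T -> Prop) x :
  P x -> (forall u v, P u -> r u v -> P v) -> forall y, connect r x y -> P y.
Proof.
move=> Px Pr y /connectP[s + ->]; elim: s x Px => [|z s IHs] x Px //=.
by case/andP=> /(Pr _ _ Px) Pz; apply: IHs.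
Qed.

Definition set_colorable (V : finType) (e : rel V) (A : {set V}) (k : nat) :=
  exists c : V -> nat,
    {in A, forall x, c x < k} /\ {in A &, forall x y, e x y -> c x != c y}.

Section SetColorable.
Variables (V : finType) (e : rel V).
Implicit Types A B I : {set V}.

Lemma set_colorable_leq A k l :
  k <= l -> set_colorable e A k -> set_colorable e A l.
Proof. by move=> kl [c [c_lt c_ok]]; exists c; split=> // x /c_lt/leq_trans; apply. Qed.

Lemma set_colorable_subset A B k :
  A \subset B -> set_colorable e B k -> set_colorable e A k.
Proof.
move=> /subsetP sAB [c [c_lt c_ok]]; exists c; split=> [x /sAB|x y /sAB xB /sAB].
  exact: c_lt.
exact: c_ok.
Qed.

Lemma set_colorable_independent I :
  {in I &, forall x y, ~~ e x y} -> set_colorable e I 1.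
Proof.
move=> indI; exists (fun=> 0); split=> // x y xI yI exy.
by have := indI x y xI yI; rewrite exy.
Qed.

Lemma set_colorable_setU A B k l :
  set_colorable e A k -> set_colorable e B l -> set_colorable e (A :|: B) (k + l).
Proof.
move=> [c1 [c1_lt c1_ok]] [c2 [c2_lt c2_ok]].
exists (fun x => if x \in A then c1 x else k + c2 x); split.
  move=> x; case: ifPn => [/c1_lt/leq_trans->//|xA]; first exact: leq_addr.
  by rewrite in_setU (negbTE xA) ltn_add2l => /c2_lt.
move=> x y; rewrite !in_setU => xAB yAB exy.
case: ifPn => xA; case: ifPn => yA.
- exact: c1_ok.
- by rewrite neq_ltn (leq_trans (c1_lt x xA)) ?leq_addr.
- by rewrite neq_ltn (leq_trans (c1_lt y yA)) ?leq_addr ?orbT.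
rewrite eqn_add2l; apply: c2_ok exy.
  by case/orP: xAB xA => ->.
by case/orP: yAB yA => ->.
Qed.

Lemma set_colorable_mul (e1 e2 : rel V) A k l :
  {in A &, forall x y, e x y -> e1 x y || e2 x y} ->
  set_colorable e1 A k -> set_colorable e2 A l -> set_colorable e A (k * l).
Proof.
move=> e_sub [c1 [c1_lt c1_ok]] [c2 [c2_lt c2_ok]].
exists (fun x => c1 x * l + c2 x); split.
  move=> x xA; have := c1_lt x xA; have := c2_lt x xA; nia.
move=> x y xA yA /(e_sub x y xA yA) /orP[/(c1_ok x y xA yA)|/(c2_ok x y xA yA)] neq.
  have l_gt0 : 0 < l by apply: leq_ltn_trans (c2_lt x xA).
  apply: contra neq => /eqP/(congr1 (divn^~ l)).
  by rewrite !divnMDl // !divn_small ?c2_lt // !addn0 => ->.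
apply: contra neq => /eqP/(congr1 (modn^~ l)).
by rewrite !modnMDl !modn_small ?c2_lt // => ->.
Qed.

Lemma set_colorable_components (g : rel V) A k :
    connect_sym g -> (forall x y, g x y -> y \in A) ->
    {in A &, forall x y, e x y -> connect g x y} ->
    {in A, forall x, set_colorable e [set y | connect g x y] k} ->
  set_colorable e A k.
Proof.
move=> gsym gA e_g colg.
have root_in x : x \in A -> fingraph.root g x \in A.
  move=> xA; apply: (@connect_ind _ g (fun y => y \in A) x xA _ _ (connect_root g x)).
  by move=> u v _ /gA.
have in_root x : x \in [set y | connect g (fingraph.root g x) y].
  by rewrite inE gsym connect_root.
have colr x : exists c : V -> nat, x \in A ->
    {in [set y | connect g x y], forall y, c y < k} /\
    {in [set y | connect g x y] &, forall y z, e y z -> c y != c z}.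
  by case: (boolP (x \in A)) => [/colg[c]|_]; [exists c | exists (fun=> 0)].
have [F F_ok] := fin_all_exists colr.
exists (fun x => F (fingraph.root g x) x); split=> [x xA|x y xA yA exy].
  by have [+ _] := F_ok _ (root_in x xA); apply.
have [_] := F_ok _ (root_in y yA); rewrite (fingraph.rootP gsym (e_g x y xA yA exy)).
by apply=> //; rewrite -(fingraph.rootP gsym (e_g x y xA yA exy)).
Qed.

Lemma colorable_set_colorable k : set_colorable e [set: V] k -> colorable e k.
Proof.
move=> [c [c_lt c_ok]]; apply/existsP.
exists [ffun x => Ordinal (c_lt x (in_setT x))].
apply/forallP=> x; apply/forallP=> y; apply/implyP=> exy.
by rewrite !ffunE -val_eqE /= c_ok ?in_setT.
Qed.

End SetColorable.

Lemma chi_le (V : finType) (e : rel V) k : colorable e k -> chi e <= k.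
Proof.
move=> colk; rewrite /chi; destruct (boolP [forall x, ~~ e x x]) => //.
by case: ex_minnP => m _; apply.
Qed.

(* [lia] case-splits on every boolean hypothesis, which is prohibitive in the
   graph contexts below: keep only the arithmetic ones. *)
Ltac nat_lia :=
  repeat match goal with
  | H : ?T |- _ =>
    lazymatch T with
    | is_true (_ <= _) => fail
    | @eq ?A _ _ => tryif unify A nat then fail else clear H
    | is_true (@eq_op _ ?x _) =>
        let A := type of x in tryif unify A nat then fail else clear H
    | is_true (~~ (@eq_op _ ?x _)) =>
        let A := type of x in tryif unify A nat then fail else clear H
    | _ => clear H
    end
  end; lia.

Section Distance.
Variables (T : finType) (r : rel T) (w : T).

Fixpoint ball n : {set T} :=
  if n is n'.+1 then ball n' :|: [set y | [exists x in ball n', r x y]] else [set w].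

Lemma ball_connect n x : x \in ball n -> connect r w x.
Proof.
elim: n x => [|n IHn] x /=; first by rewrite inE => /eqP->.
rewrite in_setU inE => /orP[/IHn//|/exists_inP[y /IHn wy yx]].
exact: connect_trans wy (connect1 yx).
Qed.

Lemma connect_ball x : connect r w x -> exists n, x \in ball n.
Proof.
apply: (@connect_ind _ r (fun x => exists n, x \in ball n)).
  by exists 0; rewrite inE.
move=> u v [n un] uv; exists n.+1; rewrite /= in_setU inE; apply/orP; right.
by apply/exists_inP; exists u.
Qed.

Lemma dist_subproof x : exists n, (x \in ball n) || ~~ connect r w x.
Proof.
case: (boolP (connect r w x)) => [/connect_ball[n xn]|_]; first by exists n; rewrite xn.
by exists 0; rewrite orbT.
Qed.

(* The second disjunct makes [dist] total: it is 0 off the component of w. *)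
Definition dist x := ex_minn (dist_subproof x).

Lemma dist_ball x : connect r w x -> x \in ball (dist x).
Proof. by move=> wx; rewrite /dist; case: ex_minnP => n; rewrite wx orbF. Qed.

Lemma dist_min x n : x \in ball n -> dist x <= n.
Proof. by move=> xn; rewrite /dist; case: ex_minnP => m _; apply; rewrite xn. Qed.

Lemma dist_eq0 x : connect r w x -> (dist x == 0) = (x == w).
Proof.
move=> wx; apply/idP/eqP => [/eqP x0|->]; last by rewrite -leqn0 dist_min ?inE.
by have := dist_ball wx; rewrite x0 inE => /eqP.
Qed.

Lemma dist_edge u v : connect r w u -> r u v -> dist v <= (dist u).+1.
Proof.
move=> wu uv; apply: dist_min; rewrite /= in_setU inE; apply/orP; right.
by apply/exists_inP; exists u; rewrite ?dist_ball.
Qed.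

Lemma dist_parent x n : connect r w x -> dist x = n.+1 -> exists2 y, r y x & dist y = n.
Proof.
move=> wx xn; have := dist_ball wx; rewrite xn /= in_setU inE => /orP[/dist_min|].
  by rewrite xn ltnn.
case/exists_inP=> y yn yx; exists y => //; apply/eqP; rewrite eqn_leq dist_min //=.
by rewrite -ltnS -xn dist_edge // (ball_connect yn).
Qed.
End Distance.

Section Graph.
Variables (V : finType) (e : rel V).
Hypotheses (e_sym : symmetric e) (e_irr : irreflexive e).
Implicit Types (A C K S : {set V}).

Definition induced A : rel V := [rel x y | [&& e x y, x \in A & y \in A]].

Lemma induced_sym A : symmetric (induced A).
Proof. by move=> x y; rewrite /induced /= e_sym [(x \in A) && _]andbC. Qed.

Lemma connect_induced_mem A x y : x \in A -> connect (induced A) x y -> y \in A.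
Proof.
by move=> xA; apply: (@connect_ind _ _ (fun y => y \in A)) => // u v _ /and3P[].
Qed.

Lemma connect_induced (g : rel V) K x y :
    subrel g e -> (forall z, connect g x z -> z \in K) ->
  connect g x y -> connect (induced K) x y.
Proof.
move=> ge gK gxy.
suff [] : connect g x y /\ connect (induced K) x y by [].
apply: (@connect_ind _ g (fun z => connect g x z /\ connect (induced K) x z) x _ _ y gxy).
  by split; apply: connect0.
move=> u v [gxu Kxu] guv; have gxv := connect_trans gxu (connect1 guv).
by split=> //; apply: connect_trans Kxu (connect1 _); rewrite /induced /= ge // !gK.
Qed.

Lemma induced_paw a b c w :
  e a b -> e a c -> e b c -> e w c -> ~~ e w a -> ~~ e w b -> induced_sub paw e.
Proof.
move=> ab ac bc wc nwa nwb.
have neq x y : e x y -> x != y by apply: contraTneq => ->; rewrite e_irr.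
have ab' := neq _ _ ab; have ac' := neq _ _ ac; have bc' := neq _ _ bc.
have wc' := neq _ _ wc.
have wa : w != a by apply: contraNneq nwb => ->.
have wb : w != b by apply: contraNneq nwa => ->; rewrite e_sym.
exists (fun i : 'I_4 => nth a [:: a; b; c; w] i); split.
  move=> [[|[|[|[|i]]]] hi] [[|[|[|[|j]]]] hj] //= E; apply: val_inj => //=;
  by move: ab' ac' bc' wc' wa wb; rewrite E ?eqxx.
move=> [[|[|[|[|i]]]] hi] [[|[|[|[|j]]]] hj] //=; rewrite /paw /paw_edge /= ?e_irr //;
by rewrite ?(negbTE nwa) ?(negbTE nwb) // e_sym ?ab ?ac ?bc ?wc
   ?(negbTE nwa) ?(negbTE nwb).
Qed.

Lemma Kdt_of_clique d t K :
  d * t <= #|K| -> {in K &, forall x y, x != y -> e x y} -> contains_Kdt d t e.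
Proof.
move=> large cliqueK.
have le_dt : #|{: 'I_d * 'I_t}| <= #|K| by rewrite card_prod !card_ord.
pose phi u : V := enum_val (widen_ord le_dt (enum_rank u)).
have phi_inj : injective phi.
  by move=> u v /enum_val_inj /(congr1 val) /= /val_inj /enum_rank_inj.
exists phi; split=> // u v neq_uv; apply: cliqueK; rewrite ?enum_valP //.
by rewrite (inj_eq phi_inj); apply: contraNneq neq_uv => ->.
Qed.

Lemma complete_multipartite_colorable A k :
    (forall x y z, x \in A -> y \in A -> z \in A -> ~~ e x y -> ~~ e y z -> ~~ e x z) ->
    (forall K, K \subset A -> {in K &, forall x y, x != y -> e x y} -> #|K| < k) ->
  set_colorable e A k.
Proof.
move=> nonadj_trans small_cliques.
pose rep u := odflt u [pick y in A | ~~ e u y].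
have repP u : u \in A -> rep u \in A /\ ~~ e u (rep u).
  move=> uA; rewrite /rep; case: pickP => [y /andP[]//|none].
  by have := none u; rewrite uA e_irr.
have rep_eq u v : u \in A -> v \in A -> ~~ e u v -> rep u = rep v.
  move=> uA vA nuv; rewrite /rep (@eq_pick _ _ [pred y | (y \in A) && ~~ e v y]).
    by case: pickP => // none; have := none v; rewrite /= vA e_irr.
  move=> y /=; case yA: (y \in A) => //=; apply/idP/idP.
    by apply: nonadj_trans; rewrite // e_sym.
  exact: nonadj_trans.
have rep_neq u v : u \in A -> v \in A -> e u v -> rep u != rep v.
  move=> uA vA euv; have [ruA nu] := repP u uA; have [_ nv] := repP v vA.
  apply/eqP => ruv; have := nonadj_trans _ _ _ uA ruA vA nu.
  by rewrite ruv e_sym => /(_ nv); rewrite euv.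
set R := rep @: A.
have R_rep r : r \in R -> r \in A /\ rep r = r.
  case/imsetP=> u uA ->; have [ruA nu] := repP u uA.
  by split=> //; apply: rep_eq; rewrite // e_sym.
have R_small : #|R| < k.
  apply: small_cliques; first by apply/subsetP=> r /R_rep[].
  move=> r s /R_rep[rA rr] /R_rep[sA ss]; apply: contraNT => nrs.
  by rewrite -rr -ss; apply/eqP/rep_eq.
exists (fun u => index (rep u) (enum R)); split.
  move=> u uA; apply: leq_trans R_small; rewrite ltnS ltnW //.
  by rewrite cardE index_mem mem_enum imset_f.
move=> u v uA vA euv; apply: contra (rep_neq u v uA vA euv) => /eqP E.
rewrite -(nth_index u (_ : rep u \in enum R)) ?mem_enum ?imset_f //.
by rewrite E nth_index ?mem_enum ?imset_f.
Qed.

Section PawFree.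
Hypothesis paw_free : ~ induced_sub paw e.

Lemma nbhd_nonadj_trans v x y z :
  e v x -> e v y -> e v z -> ~~ e x y -> ~~ e y z -> ~~ e x z.
Proof.
move=> vx vy vz nxy nyz; apply/negP => xz; apply: paw_free.
by apply: (@induced_paw x z v y); rewrite // 1?e_sym.
Qed.

Lemma nbhd_colorable d t v :
  ~ contains_Kdt d t e -> set_colorable e [set u | e v u] (d * t).
Proof.
move=> noKdt; apply: complete_multipartite_colorable.
  by move=> x y z; rewrite !inE; apply: nbhd_nonadj_trans.
by move=> K _ cliqueK; rewrite ltnNge; apply/negP => /Kdt_of_clique /(_ cliqueK).
Qed.

Lemma connect_triangle x y z u :
  e x y -> e y z -> e x z -> connect e x u -> e x u || e y u.
Proof.
move=> xy yz xz.
pose two_of v := [|| e x v && e y v, e x v && e z v | e y v && e z v].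
have one_two v : [|| e x v, e y v | e z v] -> two_of v.
  rewrite /two_of; case vx: (e x v); case vy: (e y v); case vz: (e z v) => //= _;
  exfalso; apply: paw_free.
  - by apply: (@induced_paw y z x v); rewrite // e_sym ?vx ?vy ?vz.
  - by apply: (@induced_paw x z y v); rewrite // e_sym ?vx ?vy ?vz.
  - by apply: (@induced_paw x y z v); rewrite // e_sym ?vx ?vy ?vz.
pose near v := (v \in [:: x; y; z]) || two_of v.
have near_step v w : near v -> e v w -> near w.
  move=> near_v vw; case adj_w: [|| e x w, e y w | e z w].
    by apply/orP; right; apply: one_two.
  move/negbT: adj_w; rewrite !negb_or => /and3P[nxw nyw nzw].
  have v_off : v \notin [:: x; y; z].
    rewrite !inE; apply/or3P=> -[] /eqP Ev.
    - by move: nxw; rewrite -Ev vw.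
    - by move: nyw; rewrite -Ev vw.
    - by move: nzw; rewrite -Ev vw.
  move: near_v; rewrite /near (negbTE v_off) /= => /or3P[] /andP[v1 v2];
    exfalso; apply: paw_free.
  - by apply: (@induced_paw x y v w); rewrite // e_sym.
  - by apply: (@induced_paw x z v w); rewrite // e_sym.
  - by apply: (@induced_paw y z v w); rewrite // e_sym.
have near_x : near x by rewrite /near inE eqxx.
move=> /(@connect_ind _ e (fun v => near v) x near_x near_step).
rewrite /near /two_of !inE -!orbA => /or4P[/eqP->|/eqP->|/eqP->|].
- by rewrite (e_sym y) xy orbT.
- by rewrite xy.
- by rewrite xz.
by case/or3P=> /andP[-> _]; rewrite ?orbT.
Qed.

Lemma triangle_component_colorable d t x y z C :
    ~ contains_Kdt d t e -> e x y -> e y z -> e x z -> {subset C <= connect e x} ->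
  set_colorable e C (d * t + d * t).
Proof.
move=> noKdt xy yz xz Cx.
apply: (@set_colorable_subset _ _ _ ([set u | e x u] :|: [set u | e y u])).
  by apply/subsetP=> u /Cx /(connect_triangle xy yz xz); rewrite !inE.
by apply: set_colorable_setU; apply: nbhd_colorable.
Qed.
End PawFree.

Definition induced_path (b : nat -> V) (k : nat) : Prop :=
  (forall i j, i < k -> j < k -> b i = b j -> i = j) /\
  (forall i j, i < k -> j < k -> e (b i) (b j) = (i == j.+1) || (j == i.+1)).

Definition pendant (b : nat -> V) (k i : nat) (v : V) : Prop :=
  forall j, j < k -> e (b j) v = (j == i).

Definition rcons_path (b : nat -> V) (k : nat) (v : V) : nat -> V :=
  fun j => if j < k then b j else v.

Lemma induced_path_behead b k :
  induced_path b k.+1 -> induced_path (fun j => b j.+1) k.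
Proof.
case=> inj adj; split=> i j hi hj; last exact: adj.
by move/inj => /(_ hi hj) [].
Qed.

Lemma pendant_fresh b n i v :
    induced_path b n -> 1 < i < n -> i.+2 != n -> pendant b n i v ->
  forall j, j < n -> b j != v.
Proof.
move=> [_ adj] /andP[i_gt1 i_lt_n] i2n pend j jn; apply/eqP => bjv.
have ji : j != i by have := pend j jn; rewrite -bjv e_irr => /esym/negbT.
have := pend i i_lt_n; rewrite eqxx -bjv adj // => ij.
suff [k [kn kj ki]] : exists k, [/\ k < n, (k == j.+1) || (j == k.+1) & k != i].
  by have := pend k kn; rewrite -bjv adj // kj (negbTE ki).
case/orP: ij => /eqP ij; [exists j.-1 | exists j.+1]; split; lia.
Qed.

Lemma induced_path_rcons b k v :
    induced_path b k -> 0 < k -> pendant b k k.-1 v -> (forall j, j < k -> b j != v) ->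
  induced_path (rcons_path b k v) k.+1.
Proof.
move=> [inj adj] k_gt0 pend fresh; rewrite /rcons_path.
have top i : i < k.+1 -> ~~ (i < k) -> i = k by lia.
split=> i j hi hj; case: ifPn => ik; case: ifPn => jk.
- exact: inj.
- by rewrite (top j) // => /eqP; rewrite (negbTE (fresh i ik)).
- by rewrite (top i) // => /esym/eqP; rewrite (negbTE (fresh j jk)).
- by rewrite (top i) // (top j).
- exact: adj.
- by rewrite (top j) // pend //; lia.
- by rewrite (top i) // e_sym pend //; lia.
- by rewrite (top i) // (top j) // e_irr ltn_eqF.
Qed.

Lemma T1_of_path_pendant p q y :
  2 < p -> induced_path q p.+2 -> pendant q p.+2 p.-1 y -> induced_sub (T1 p) e.
Proof.
move=> p_gt2 qpath pend; have [inj adj] := qpath.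
have fresh := pendant_fresh qpath _ _ pend.
have {}fresh j : j < p.+2 -> q j != y by apply: fresh; lia.
have top i : i < p + 3 -> ~~ (i < p.+2) -> i = p.+2 by lia.
exists (fun i : 'I_(p + 3) => rcons_path q p.+2 y i); rewrite /rcons_path; split.
  move=> i j; have := ltn_ord i; have := ltn_ord j.
  case: ifPn => ip; case: ifPn => jp => hj hi E.
  - exact/val_inj/inj.
  - by move: (fresh i ip); rewrite E eqxx.
  - by move: (fresh j jp); rewrite -E eqxx.
  - by apply: val_inj; rewrite /= (top i) // (top j).
move=> i j; rewrite /T1; have := ltn_ord i; have := ltn_ord j.
case: ifPn => ip; case: ifPn => jp => hj hi.
- by rewrite adj //; rewrite /T1_edge; lia.
- by rewrite pend // (top j) // /T1_edge; lia.
- by rewrite e_sym pend // (top i) // /T1_edge; lia.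
- by rewrite e_irr (top i) // (top j) // /T1_edge; lia.
Qed.

Lemma T1_of_fork p b x y z :
    2 < p -> induced_path b p -> pendant b p p.-1 x -> pendant b p p.-1 y ->
    (forall j, j < p -> ~~ e (b j) z) -> e x z -> ~~ e x y -> ~~ e y z ->
  induced_sub (T1 p) e.
Proof.
move=> p_gt2 bpath px py nz xz nxy nyz.
have bx_path : induced_path (rcons_path b p x) p.+1.
  apply: induced_path_rcons => //; first lia.
  by apply: pendant_fresh px => //; lia.
have pz : pendant (rcons_path b p x) p.+1 p z.
  move=> j; rewrite ltnS leq_eqVlt /rcons_path => /orP[/eqP->|jp].
    by rewrite ltnn xz eqxx.
  by rewrite jp (negbTE (nz j jp)); lia.
apply: (@T1_of_path_pendant p (rcons_path (rcons_path b p x) p.+1 z) y) => //.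
  apply: induced_path_rcons => //; apply: pendant_fresh pz => //; lia.
move=> j j_lt; rewrite /rcons_path /=; have [jp|pj|->] := ltngtP j p.
- by rewrite ltnS (ltnW jp) py.
- have -> : j = p.+1 by lia.
  by rewrite ltnn e_sym (negbTE nyz); lia.
- by rewrite ltnSn (negbTE nxy); lia.
Qed.

Definition triangle_free_on S := forall x y z, x \in S -> e x y -> e x z -> ~~ e y z.

Definition hangs_from S (a : nat -> V) (k : nat) : Prop :=
  [/\ induced_path a k, forall j, j < k -> a j \notin S,
      forall j s, j < k.-1 -> s \in S -> ~~ e (a j) s
    & forall s, s \in S -> connect (induced (a k.-1 |: S)) (a k.-1) s].

Section Hanging.
Variable p : nat.
Hypotheses (p_gt2 : 2 < p) (T1_free : ~ induced_sub (T1 p) e).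

Section Base.
Variables (a : nat -> V) (S : {set V}).
Hypotheses (hangS : hangs_from S a p) (tfS : triangle_free_on S).

Local Notation w := (a p.-1).
Local Notation U := (w |: S).
Local Notation d := (dist (induced U) w).

Let w_notin : w \notin S.
Proof. by case: hangS => _ + _ _; apply; nat_lia. Qed.

Let reachU x : x \in U -> connect (induced U) w x.
Proof. by case/setU1P=> [->|]; [apply: connect0 | case: hangS => _ _ _; apply]. Qed.

Let SU x : x \in S -> x \in U.
Proof. by move=> xS; rewrite setU1r. Qed.

Let dist_edgeU u v : u \in U -> v \in U -> e u v -> d v <= (d u).+1.
Proof.
by move=> uU vU uv; apply: dist_edge (reachU uU) _; rewrite /induced /= uv uU vU.
Qed.

Let in_S_dist x : x \in U -> (x \in S) = (0 < d x).
Proof.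
move=> xU; rewrite lt0n dist_eq0 ?reachU //.
case/setU1P: xU => [->|xS]; first by rewrite eqxx (negbTE w_notin).
by rewrite xS; apply/esym; apply: contraNneq w_notin => <-.
Qed.

Let parentU x n : x \in U -> d x = n.+1 -> exists y, [/\ y \in U, e y x & d y = n].
Proof.
by move=> xU /(dist_parent (reachU xU))[y /and3P[yx yU _] yn]; exists y.
Qed.

(* b_(p-1-i) sees no vertex of S deeper than layer d x - i + 1, as if it lay
   in layer d x - i. *)
Definition good_path x (b : nat -> V) := [/\ induced_path b p, b p.-1 = x &
  forall j v, j < p.-1 -> v \in S -> d x + j.+2 <= d v + p.-1 -> ~~ e (b j) v].

Lemma good_path_source : good_path w a.
Proof. by case: hangS => apath _ a_nonadj _; split=> // j v jp vS _; apply: a_nonadj. Qed.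

Lemma good_path_step y x b :
    good_path y b -> y \in U -> e y x -> x \in U -> d x = (d y).+1 ->
  good_path x (rcons_path (fun j => b j.+1) p.-1 x).
Proof.
move=> [bpath blast binv] yU yx xU dx.
have xS : x \in S by rewrite in_S_dist // dx.
have bpath' : induced_path (fun j => b j.+1) p.-1.
  by apply: induced_path_behead; rewrite prednK //; nat_lia.
split; last 2 first.
- by rewrite /rcons_path ltnn.
- move=> j v jp vS dv; rewrite /rcons_path jp.
  have [jE|jn] := eqVneq j.+1 p.-1; last by apply: binv => //; nat_lia.
  rewrite jE blast; apply/negP => yv; have := dist_edgeU yU (SU vS) yv; nat_lia.
rewrite -[X in induced_path _ X](@prednK p) ?(ltn_trans _ p_gt2) //.
apply: induced_path_rcons => //; first nat_lia.
  move=> j jp; have [->|jn] := eqVneq j p.-1.-1.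
    by rewrite prednK ?blast ?yx ?eqxx //; nat_lia.
  by apply/negbTE/binv => //; nat_lia.
move=> j jp; apply/eqP => bx.
have /negP := binv j x jp xS ltac:(nat_lia); apply.
by rewrite -bx; case: bpath => _ ->; rewrite ?eqxx ?orbT //; nat_lia.
Qed.

Lemma good_path_exists x : x \in U -> exists b, good_path x b.
Proof.
move: {2}(d x) (erefl (d x)) => n; elim: n x => [|n IHn] x dx xU.
  have /eqP-> : x == w by rewrite -(dist_eq0 (reachU xU)) dx.
  by exists a; apply: good_path_source.
have [y [yU yx dy]] := parentU xU dx; have [b gb] := IHn y dy yU.
exists (rcons_path (fun j => b j.+1) p.-1 x).
by apply: good_path_step gb yU yx xU _; rewrite dx dy.
Qed.

Lemma good_path_pendant x b v :
    good_path x b -> v \in S -> e x v -> d x <= d v -> ~~ e (b p.-2) v ->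
  pendant b p p.-1 v.
Proof.
move=> [_ blast binv] vS xv dxv nv j jp.
have [->|jn1] := eqVneq j p.-1; first by rewrite blast xv.
have [->|jn2] := eqVneq j p.-2; first exact/negbTE.
by apply/negbTE/binv => //; nat_lia.
Qed.

(* Otherwise T1 appears: as a fork at the parent a0 of x, hanging from a good
   path to a0, if z ~ a0; as a fork at x, hanging from a good path to x
   through a0, if not. *)
Lemma same_level_closed x x1 z x2 :
    x \in S -> x1 \in S -> z \in S -> x2 \in S ->
    d x1 = d x -> d z = d x -> d x2 = d x ->
  e x x1 -> e x1 z -> z != x -> e x x2 -> e z x2.
Proof.
move=> xS x1S zS x2S dx1 dz dx2 xx1 x1z zx xx2; apply/negPn/negP => nzx2.
have nxz : ~~ e x z by apply: tfS x1S _ x1z; rewrite e_sym.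
have dx_gt0 : 0 < d x by rewrite -in_S_dist ?SU.
have [a0 [a0U a0x da0]] := parentU (SU xS) (esym (prednK dx_gt0)).
have na0 v : e x v -> ~~ e a0 v by apply: tfS; rewrite // e_sym.
have [b0 gb0] := good_path_exists a0U; have [b0path b0last b0inv] := gb0.
have b0_far v j : v \in S -> d v = d x -> j < p.-1 -> ~~ e (b0 j) v.
  by move=> vS dv jp; apply: b0inv => //; nat_lia.
have [za0|nza0] := boolP (e z a0).
  apply: T1_free; apply: (@T1_of_fork p b0 x z x2) => //.
  - apply: (good_path_pendant gb0 xS a0x); first nat_lia.
    by apply: b0_far => //; nat_lia.
  - apply: (good_path_pendant gb0 zS); first by rewrite e_sym.
      by nat_lia.
    by apply: b0_far => //; nat_lia.
  - move=> j jp; have [->|jn] := eqVneq j p.-1; first by rewrite b0last na0.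
    by apply: b0_far => //; nat_lia.
pose b := rcons_path (fun j => b0 j.+1) p.-1 x.
have gb : good_path x b by apply: good_path_step gb0 a0U a0x (SU xS) _; nat_lia.
have b_a0 : b p.-2 = a0 by rewrite /b /rcons_path ifT prednK ?b0last //; nat_lia.
apply: T1_free; apply: (@T1_of_fork p b x1 x2 z) => //; first by case: gb.
- by apply: good_path_pendant gb x1S _ _ _; rewrite ?b_a0 ?na0 ?dx1.
- by apply: good_path_pendant gb x2S _ _ _; rewrite ?b_a0 ?na0 ?dx2.
- move=> j jp; have [->|jn1] := eqVneq j p.-1; first by case: gb => _ ->.
  have [->|jn2] := eqVneq j p.-2; first by rewrite b_a0 e_sym.
  by case: gb => _ _; apply=> //; nat_lia.
- by apply: tfS xS _ _.
- by rewrite e_sym.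
Qed.

Definition level_edge : rel V := [rel u v | induced S u v && (d u == d v)].

Lemma level_edge_sym : symmetric level_edge.
Proof.
by move=> u v; rewrite /level_edge /induced /= e_sym [(u \in S) && _]andbC eq_sym.
Qed.

Lemma connect_level r y : r \in S -> connect level_edge r y -> y \in S /\ d y = d r.
Proof.
move=> rS; apply: (@connect_ind _ level_edge (fun y => y \in S /\ d y = d r)) => //.
move=> u v [_ du].
by case/andP=> /and3P[_ _ vS] /eqP <-.
Qed.

Lemma level_component r y : r \in S -> connect level_edge r y ->
  [\/ y = r, e r y | [/\ y != r, ~~ e r y, exists n, level_edge r n &
                        forall n, level_edge r n -> e y n]].
Proof.
move=> rS ry; pose near_root y := [\/ y = r, e r y | [/\ y != r, ~~ e r y,
  exists n, level_edge r n & forall n, level_edge r n -> e y n]].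
suff [] : connect level_edge r y /\ near_root y by [].
move: y ry; apply: (@connect_ind _ _ (fun y => connect level_edge r y /\ near_root y)).
  by split; [apply: connect0 | constructor 1].
move=> u v [ru near_u] uv; have rv := connect_trans ru (connect1 uv); split=> //.
have [[uS du] [vS dv]] := (connect_level rS ru, connect_level rS rv).
have /andP[/and3P[euv _ _] _] := uv.
have lev n : level_edge r n -> [/\ n \in S, d n = d r & e r n].
  by case/andP=> /and3P[-> _ ->] /eqP.
case: near_u => [ur|eru|[ur neru [n0 rn0] un]].
- by constructor 2; rewrite -ur.
- have [->|vr] := eqVneq v r; first by constructor 1.
  have [erv|nerv] := boolP (e r v); first by constructor 2.
  constructor 3; split=> //.
    by exists u; rewrite /level_edge /induced /= eru rS uS du eqxx.
  move=> n /lev[nS dn ern].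
  by apply: (same_level_closed rS uS vS nS) => //; rewrite ?du ?dv ?dn.
- have [vr|vr] := eqVneq v r; first by move: neru; rewrite -vr e_sym euv.
  have [n0S dn0 ern0] := lev n0 rn0; constructor 2.
  apply: (same_level_closed uS n0S rS vS (etrans dn0 (esym du)) (esym du)
           (etrans dv (esym du)) (un n0 rn0)) => //.
  - by rewrite e_sym.
  - by rewrite eq_sym.
Qed.

Lemma level_colorable : set_colorable level_edge S 2.
Proof.
apply: (set_colorable_components (sym_connect_sym level_edge_sym)).
- by move=> x y /andP[/and3P[]].
- by move=> x y _ _ /connect1.
move=> r rS; exists (fun y => nat_of_bool (e r y)); split=> [y _|x y].
  by case: (e r y).
rewrite !inE => rx ry /andP[/and3P[xy xS yS] _].
have [Ex|erx|[xr nerx [n0 rn0] xn]] := level_component rS rx;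
have [Ey|ery|[yr nery _ yn]] := level_component rS ry.
- by rewrite Ex Ey e_irr in xy.
- by rewrite Ex e_irr ery.
- by rewrite Ex in xy; rewrite xy in nery.
- by rewrite Ey e_irr erx.
- by have := tfS rS erx ery; rewrite xy.
- by rewrite erx (negbTE nery).
- by rewrite Ey e_sym in xy; rewrite xy in nerx.
- by rewrite ery (negbTE nerx).
have n0S : n0 \in S by case/andP: rn0 => /and3P[].
have n0x : e n0 x by rewrite e_sym xn.
have n0y : e n0 y by rewrite e_sym yn.
by have := tfS n0S n0x n0y; rewrite xy.
Qed.

Lemma parity_colorable : set_colorable [rel u v | e u v && (d u != d v)] S 2.
Proof.
exists (fun x => nat_of_bool (odd (d x))); split=> [x _|x y xS yS /andP[xy]].
  by case: odd.
have := dist_edgeU (SU xS) (SU yS) xy; rewrite e_sym in xy.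
have := dist_edgeU (SU yS) (SU xS) xy; move: (d x) (d y) => m n nm mn neq_mn.
have [->|->] : m = n.+1 \/ n = m.+1 by lia.
  by rewrite /=; case: odd.
by rewrite /=; case: odd.
Qed.

Lemma hangs_from_colorable_base : set_colorable e S 4.
Proof.
apply: (set_colorable_mul _ parity_colorable level_colorable) => x y xS yS xy.
by rewrite /level_edge /induced /= xy xS yS; case: (_ == _).
Qed.
End Base.

Section Step.
Variables (k : nat) (a : nat -> V) (S : {set V}).
Hypotheses (hangS : hangs_from S a k) (k_gt0 : 0 < k).

Local Notation w := (a k.-1).
Local Notation N := (S :&: [set s | e w s]).
Local Notation D := (S :\: [set s | e w s]).

Lemma hangs_from_anchor x : x \in D ->
  exists n m, [/\ n \in N, e n m, m \in D & connect (induced D) m x].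
Proof.
have w_notin : w \notin S by case: hangS => _ + _ _; apply; rewrite prednK.
suff : forall v, connect (induced (w |: S)) w v -> [\/ v = w, v \in N |
  exists n m, [/\ n \in N, e n m, m \in D & connect (induced D) m v]].
  move=> H xD; have /setDP[xS xN] := xD.
  case: hangS => _ _ _ /(_ x xS)/H[xw|xN'|//].
    by rewrite -xw xS in w_notin.
  by move: xN'; rewrite inE (negbTE xN) andbF.
apply: connect_ind; first by constructor 1.
move=> u v near_u /and3P[uv uU vU].
have [->|vS] := setU1P vU; first by constructor 1.
have [vw|vnw] := boolP (e w v); first by constructor 2; rewrite !inE vS.
have vD : v \in D by rewrite !inE vS vnw.
constructor 3; case: near_u => [uw|uN|[n [m [nN nm mD mu]]]].
- by rewrite -uw uv in vnw.
- by exists u, v; split=> //; apply: connect0.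
- exists n, m; split=> //; apply: (connect_trans mu (connect1 _)).
  by rewrite /induced /= uv vD (connect_induced_mem mD mu).
Qed.

Lemma hangs_from_component x : x \in D ->
  exists n, hangs_from [set y | connect (induced D) x y] (rcons_path a k n) k.+1.
Proof.
move=> xD; have [n [m [nN nm mD mx]]] := hangs_from_anchor xD.
have [apath a_notin a_nonadj _] := hangS.
have [nS wn] : n \in S /\ e w n by move: nN; rewrite !inE => /andP[].
have D_sym := sym_connect_sym (induced_sym D).
set K := [set y | connect (induced D) x y].
have KD y : y \in K -> y \in D by rewrite inE; apply: connect_induced_mem.
have mK z : connect (induced D) m z -> z \in K.
  by move=> mz; rewrite inE (connect_trans _ mz) // D_sym.
have nK : n \notin K by apply/negP => /KD/setDP[_]; rewrite inE wn.
exists n; split.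
- apply: induced_path_rcons => // [j jk|j jk].
    have [->|jw] := eqVneq j k.-1; first exact: wn.
    by apply/negbTE/a_nonadj => //; rewrite ltn_neqAle jw -ltnS prednK.
  by apply: contraNneq (a_notin j jk) => ->.
- move=> j; rewrite ltnS leq_eqVlt /rcons_path => /orP[/eqP->|jk]; first by rewrite ltnn.
  by rewrite jk; apply: contra (a_notin j jk) => /KD/setDP[].
- move=> j s /= jk /KD/setDP[sS sw]; rewrite /rcons_path jk.
  have [->|jw] := eqVneq j k.-1; first by move: sw; rewrite inE.
  by apply: a_nonadj => //; rewrite ltn_neqAle jw -ltnS prednK.
move=> s sK; rewrite /= /rcons_path ltnn.
apply: (connect_trans (connect1 (_ : induced (n |: K) n m))).
  by rewrite /induced /= nm setU11 setU1r ?mK ?connect0.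
apply: (@connect_induced (induced D)) => [u v /and3P[] | z /mK zK | ] //.
  by rewrite setU1r.
by rewrite inE in sK; apply: (connect_trans mx sK).
Qed.

Lemma hangs_from_neighbours_independent :
  triangle_free_on S -> {in N &, forall x y, ~~ e x y}.
Proof.
move=> tfS x y; rewrite !inE => /andP[xS wx] /andP[_ wy].
by apply: contraTN wy => xy; apply: tfS xS _ xy; rewrite e_sym.
Qed.
End Step.

Lemma hangs_from_colorable m k a S :
    k + m = p -> 0 < k -> hangs_from S a k -> triangle_free_on S ->
  set_colorable e S (4 + m).
Proof.
elim: m k a S => [|m IHm] k a S km k_gt0 hangS tfS.
  by rewrite addn0 in km *; subst k; apply: hangs_from_colorable_base hangS tfS.
set D := S :\: [set s | e (a k.-1) s].
rewrite -(setID S [set s | e (a k.-1) s]) addnS -add1n.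
apply: set_colorable_setU.
  exact/set_colorable_independent/hangs_from_neighbours_independent.
apply: (set_colorable_components (sym_connect_sym (induced_sym D))).
- by move=> x y /and3P[].
- by move=> x y xD yD xy; apply: connect1; rewrite /induced /= xy xD yD.
move=> x xD; have [n hangK] := hangs_from_component hangS k_gt0 xD.
apply: IHm hangK _ => //; first by rewrite addSnnS.
move=> u y z /[!inE] /(connect_induced_mem xD) /setDP[uS _].
exact: tfS.
Qed.
End Hanging.

Section Main.
Variables (p d t : nat).
Hypotheses (p_gt2 : 2 < p) (paw_free : ~ induced_sub paw e)
  (T1_free : ~ induced_sub (T1 p) e) (noKdt : ~ contains_Kdt d t e).

Lemma triangle_free_component_colorable r :
    triangle_free_on [set y | connect e r y] ->
  set_colorable e [set y | connect e r y] (p + 4).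
Proof.
set C := [set y | connect e r y] => tfC.
have rC : r \in C by rewrite inE connect0.
rewrite -(setD1K rC) (_ : p + 4 = 1 + (4 + p.-1)); last by lia.
apply: set_colorable_setU.
  by apply: set_colorable_independent => x y /set1P-> /set1P->; rewrite e_irr.
apply: (hangs_from_colorable p_gt2 T1_free (k := 1) (a := fun=> r)) => //; first lia.
  split=> //.
  - by split=> [[|i] [|j] | [|i] [|j]] //; rewrite e_irr.
  - by move=> j _; rewrite setD11.
  move=> s; rewrite /= setD1K // => /setD1P[_]; rewrite inE.
  by apply: connect_induced => // z; rewrite inE.
by move=> x y z /setD1P[_]; apply: tfC.
Qed.

Lemma component_colorable r :
  set_colorable e [set y | connect e r y] (p + 4 + 2 * d * t).
Proof.
set C := [set y | connect e r y].
have [|notri] := boolP [exists x in C, exists y, exists z, [&& e x y, e y z & e x z]].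
  case/exists_inP=> x xC /existsP[y /existsP[z /and3P[xy yz xz]]].
  apply: set_colorable_leq (triangle_component_colorable paw_free noKdt xy yz xz _).
    by lia.
  move=> u; rewrite inE; apply: connect_trans.
  by rewrite (sym_connect_sym e_sym); rewrite inE in xC.
apply: set_colorable_leq (triangle_free_component_colorable _); first lia.
move=> x y z xC xy xz; apply/negP => yz; move/negP: notri; apply.
apply/exists_inP; exists x => //; apply/existsP; exists y; apply/existsP; exists z.
by rewrite xy yz xz.
Qed.

Lemma chi_paw_T1_free : chi e <= p + 4 + 2 * d * t.
Proof.
apply/chi_le/colorable_set_colorable.
apply: (set_colorable_components (sym_connect_sym e_sym)).
- by move=> x y _; rewrite in_setT.
- by move=> x y _ _ /connect1.
- by move=> r _; apply: component_colorable.
Qed.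
End Main.
End Graph.

Local Open Scope ring_scope.

Theorem theorem8 :
  forall p : nat, (4 <= p)%N ->
  forall d : nat, (1 <= d)%N ->
  exists f : {poly int},
  forall t : nat, (1 <= t)%N ->
  forall (V : finType) (e : rel V),
    simple_graph e ->
    H_free paw e ->
    H_free (T1 p) e ->
    ~ contains_Kdt d t e ->
    ((chi e)%:Z <= f.[t%:Z])%R.
Proof.
move=> p p_ge4 d _; exists ((p + 4)%N%:Z%:P + (2 * d)%N%:Z%:P * 'X).
move=> t _ V e [e_sym e_irr] paw_free T1_free noKdt.
rewrite !hornerE -PoszM -PoszD lez_nat.
exact: (chi_paw_T1_free e_sym e_irr (ltnW p_ge4) paw_free T1_free noKdt).
Qed.
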